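(* Let $\mathbb{F}\in\{\mathbb{R},\mathbb{C}\}$, let $n\geq 1$, and equip $M_n(\mathbb{F})$ with a norm $\|\cdot\|$. Let $f,g\colon GL_n(\mathbb{F})\to GL_n(\mathbb{F})$ be mappings, at least one of which is open (with respect to the topology of $GL_n(\mathbb{F})$ as a subspace of $M_n(\mathbb{F})$). Let $A,B\in M_n(\mathbb{F})$. Then for every $\varepsilon>0$ there exist invertible matrices $A_\varepsilon,B_\varepsilon\in GL_n(\mathbb{F})$, each with a simple spectrum, such that $\|A-A_\varepsilon\|<\varepsilon$, $\|B-B_\varepsilon\|<\varepsilon$, and the product $f(A_\varepsilon)g(B_\varepsilon)$ has a simple spectrum.
   Context: $M_n(\mathbb{F})$ is the space of $n\times n$ matrices over $\mathbb{F}$ and $GL_n(\mathbb{F})$ the group of invertible ones; all norms on $M_n(\mathbb{F})$ induce the same topology. A matrix has a simple spectrum if all its eigenvalues (the roots in $\mathbb{C}$ of its characteristic polynomial) have algebraic multiplicity one, i.e. are pairwise distinct. A mapping is open if it sends open sets to open sets. The mappings $f,g$ are not assumed to be continuous or homomorphisms. *)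

From HB Require Import structures.
From mathcomp Require Import all_boot all_order all_algebra.
From mathcomp Require Import reals.
From mathcomp Require Import complex.
Set Implicit Arguments. Unset Strict Implicit. Unset Printing Implicit Defensive.
Import Order.TTheory GRing.Theory Num.Theory.
Local Open Scope ring_scope.

(* A norm on M_n(F), valued in F (for F = C the values are forced to be
   nonnegative reals by 0 <= N A). *)
Definition is_mxnorm (F : numFieldType) (n : nat) (N : 'M[F]_n -> F) : Prop :=
  [/\ forall A, 0 <= N A,
      forall A, N A = 0 -> A = 0,
      forall A B, N (A + B) <= N A + N B &
      forall (c : F) A, N (c *: A) = `|c| * N A].

Definition open_in_GL (F : numFieldType) (n : nat) (N : 'M[F]_n -> F)
    (U : 'M[F]_n -> Prop) : Prop :=
  (forall A, U A -> A \in unitmx) /\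
  forall A, U A -> exists2 d : F, 0 < d &
    forall B, B \in unitmx -> N (B - A) < d -> U B.

Definition img (T : Type) (f : T -> T) (U : T -> Prop) : T -> Prop :=
  fun y => exists2 x, U x & y = f x.

Definition open_GL_map (F : numFieldType) (n : nat) (N : 'M[F]_n -> F)
    (f : 'M[F]_n -> 'M[F]_n) : Prop :=
  forall U, open_in_GL N U -> open_in_GL N (img f U).

(* Simple spectrum: every complex root of the characteristic polynomial
   (viewed in C = R[i] through the embedding iota : F -> C) has algebraic
   multiplicity one, i.e. (X - z)^2 never divides it. *)
Definition simple_spectrum (R : realType) (F : numFieldType)
    (iota : {rmorphism F -> R[i]}) (n : nat) (A : 'M[F]_n) : Prop :=
  forall z : R[i], ~~ ((('X - z%:P) ^+ 2) %| map_poly iota (char_poly A)).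

Definition prop1_for (R : realType) (F : numFieldType)
    (iota : {rmorphism F -> R[i]}) : Prop :=
  forall (n : nat), (0 < n)%N ->
  forall (N : 'M[F]_n -> F), is_mxnorm N ->
  forall (f g : 'M[F]_n -> 'M[F]_n),
    (forall A, A \in unitmx -> f A \in unitmx) ->
    (forall A, A \in unitmx -> g A \in unitmx) ->
    (open_GL_map N f \/ open_GL_map N g) ->
  forall (A B : 'M[F]_n) (eps : F), 0 < eps ->
  exists (Ae Be : 'M[F]_n),
    [/\ Ae \in unitmx /\ Be \in unitmx,
        simple_spectrum iota Ae /\ simple_spectrum iota Be,
        N (A - Ae) < eps /\ N (B - Be) < eps &
        simple_spectrum iota (f Ae *m g Be)].

(* The invertible matrices with simple spectrum are exactly those at which the
   polynomial function disc * det of the entries does not vanish, where disc is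
   the discriminant of the characteristic polynomial. This set is open, by
   continuity, and dense: on the segment from any matrix to diag(1, ..., n),
   where disc * det is nonzero, it is a nonzero polynomial in one variable.
   If f is open, pick B' near B in this set; f maps the open set U of such
   matrices near A onto an open set, which by density (transported by right
   multiplication with g(B')^-1) contains some Y with Y g(B') in the set; then
   Y = f(A') with A' in U. If g is open the argument is symmetric, since XY and
   YX have the same characteristic polynomial when X is invertible. Finally,
   every norm on the finite-dimensional space of matrices dominates the
   entries, so the entrywise topology used above is coarser than the norm
   topology. *)

From HB Require Import structures.
From mathcomp Require Import all_boot all_order all_algebra.
From mathcomp Require Import reals complex separable.
From mathcomp Require Import boolp classical_sets functions topology normedtype derive.
From mathcomp Require Import lra.
Set Implicit Arguments. Unset Strict Implicit. Unset Printing Implicit Defensive.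
Import Order.TTheory GRing.Theory Num.Theory.
Import numFieldNormedType.Exports.
Local Open Scope ring_scope.

Definition disc (R : comNzRingType) n (A : 'M[R]_n) :=
  resultant (char_poly A) (char_poly A)^`().

Definition disc_det (R : comNzRingType) n (A : 'M[R]_n) := disc A * \det A.

Lemma map_resultant_size (R S : comNzRingType) (f : {rmorphism R -> S})
    (p q : {poly R}) :
  size (map_poly f p) = size p -> size (map_poly f q) = size q ->
  f (resultant p q) = resultant (map_poly f p) (map_poly f q).
Proof.
move=> sp sq; rewrite /resultant /Sylvester_mx sp sq -det_map_mx /= map_col_mx.
by congr (\det (col_mx _ _)); apply: map_lin1_mx => v;
  rewrite map_poly_rV rmorphM /= map_rVpoly.
Qed.

Lemma size_deriv_char_poly (F : numFieldType) n (A : 'M[F]_n) :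
  size (char_poly A)^`() = n.
Proof.
have cp_neq0 : char_poly A != 0 by rewrite monic_neq0 ?char_poly_monic.
apply/eqP; rewrite eqn_leq -ltnS -(size_char_poly A) lt_size_deriv //=.
case: n A cp_neq0 => // m A _; rewrite ltnNge; apply/negP => small.
have := coef_deriv (char_poly A) m; rewrite nth_default //.
have /monicP := char_poly_monic A; rewrite lead_coefE size_char_poly /= => ->.
by move/eqP; rewrite eq_sym pnatr_eq0.
Qed.

Lemma map_disc (R : comNzRingType) (F : numFieldType) (f : {rmorphism R -> F})
    n (A : 'M[R]_n) :
  f (disc A) = disc (map_mx f A).
Proof.
have cp_neq0 : char_poly A != 0 by rewrite monic_neq0 ?char_poly_monic.
rewrite /disc -map_char_poly deriv_map map_resultant_size //.
  by rewrite size_map_poly_id0 // (monicP (char_poly_monic A)) rmorph1 oner_eq0.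
have size_map : size (map_poly f (char_poly A)^`()) = n.
  by rewrite -deriv_map map_char_poly size_deriv_char_poly.
apply/eqP; rewrite eqn_leq size_poly /= size_map.
by rewrite -ltnS -(size_char_poly A) lt_size_deriv.
Qed.

Lemma map_disc_det (R : comNzRingType) (F : numFieldType)
    (f : {rmorphism R -> F}) n (A : 'M[R]_n) :
  f (disc_det A) = disc_det (map_mx f A).
Proof. by rewrite /disc_det rmorphM /= map_disc det_map_mx. Qed.

Lemma sqr_XsubC_dvdp (R : idomainType) (p : {poly R}) z :
  root p z -> root p^`() z -> ('X - z%:P) ^+ 2 %| p.
Proof.
move=> /factor_theorem[q ->]; rewrite derivM derivXsubC mulr1 rootE.
rewrite hornerD hornerM hornerXsubC subrr mulr0 add0r -/(root q z).
by move=> /factor_theorem[r ->]; rewrite -mulrA -expr2 dvdp_mull.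
Qed.

Lemma separable_no_sqr_XsubC (C : closedFieldType) (p : {poly C}) :
  (forall z, ~~ (('X - z%:P) ^+ 2 %| p)) -> separable_poly p.
Proof.
move=> nosq; rewrite unlock; apply: Pdiv.ClosedField.root_coprimep => z pz.
exact: contra (sqr_XsubC_dvdp pz) (nosq z).
Qed.

Lemma simple_spectrumE (R : realType) (F : numFieldType)
    (iota : {rmorphism F -> R[i]}) n (A : 'M[F]_n) :
  simple_spectrum iota A <-> separable_poly (char_poly A).
Proof.
split=> [nosq | sepA z]; first by rewrite -(separable_map iota) separable_no_sqr_XsubC.
by rewrite separable_nosquare ?separable_map ?size_XsubC.
Qed.

Lemma separable_char_polyE (F : fieldType) n (A : 'M[F]_n) :
  separable_poly (char_poly A) = (disc A != 0).
Proof.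
rewrite unlock /coprimep /disc resultant_eq0.
have : gcdp (char_poly A) (char_poly A)^`() != 0.
  by rewrite gcdp_eq0 negb_and monic_neq0 // char_poly_monic.
by rewrite -size_poly_gt0; case: (size _) => [|[|k]].
Qed.

Lemma disc_det_neq0_unitmx (F : fieldType) n (A : 'M[F]_n) :
  disc_det A != 0 -> A \in unitmx.
Proof. by rewrite mulf_eq0 negb_or unitmxE unitfE => /andP[]. Qed.

Lemma disc_det_neq0_simple (R : realType) (F : numFieldType)
    (iota : {rmorphism F -> R[i]}) n (A : 'M[F]_n) :
  disc_det A != 0 -> simple_spectrum iota A.
Proof.
by rewrite mulf_eq0 negb_or simple_spectrumE separable_char_polyE => /andP[].
Qed.

Definition spread_mx (F : numFieldType) n : 'M[F]_n :=
  diag_mx (\row_(i < n) (i.+1)%:R).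

Lemma disc_det_spread_mx (F : numFieldType) n : disc_det (spread_mx F n) != 0.
Proof.
rewrite mulf_neq0 //; last first.
  by rewrite det_diag; apply/prodf_neq0 => i _; rewrite mxE pnatr_eq0.
rewrite -separable_char_polyE char_poly_trig ?diag_mx_is_trig //.
rewrite (eq_bigr (fun i : 'I_n => 'X - ((val i).+1)%:R%:P)); last first.
  by move=> i _; rewrite !mxE eqxx.
rewrite -(big_map (fun i : 'I_n => ((val i).+1)%:R) xpredT (fun x => 'X - x%:P)).
rewrite separable_prod_XsubC map_inj_uniq ?index_enum_uniq //.
by move=> i j /eqP; rewrite eqr_nat eqSS => /eqP/val_inj.
Qed.

Definition toward_spread (F : numFieldType) n (M : 'M[F]_n) (u : F) : 'M[F]_n :=
  M + u *: (spread_mx F n - M).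

Lemma disc_det_toward_spread_poly (F : numFieldType) n (M : 'M[F]_n) :
  {q : {poly F} | q != 0 & forall u, disc_det (toward_spread M u) = q.[u]}.
Proof.
pose P := map_mx polyC M + 'X *: map_mx polyC (spread_mx F n - M).
have evalP u : map_mx (horner_eval u) P = toward_spread M u.
  apply/matrixP => i j.
  by rewrite !mxE /horner_eval hornerD hornerM hornerX !hornerC.
exists (disc_det P) => [|u]; last by rewrite -evalP -map_disc_det.
apply: contraNneq (disc_det_spread_mx F n) => P0.
have -> : spread_mx F n = toward_spread M 1.
  by rewrite /toward_spread scale1r addrC subrK.
by rewrite -evalP -map_disc_det P0 rmorph0.
Qed.

Lemma poly_nonroot_near0 (F : numFieldType) (q : {poly F}) (d : F) :
  q != 0 -> 0 < d -> exists2 u, 0 < u < d & ~~ root q u.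
Proof.
move=> q_neq0 d_gt0; pose pts := [seq d / (j.+2)%:R | j <- iota 0 (size q)].
have pts_uniq : uniq pts.
  rewrite map_inj_uniq ?iota_uniq // => a b /(mulfI (lt0r_neq0 d_gt0)).
  by move/invr_inj/eqP; rewrite eqr_nat !eqSS => /eqP.
have : ~~ all (root q) pts.
  apply/negP => all_roots; have := max_poly_roots q_neq0 all_roots pts_uniq.
  by rewrite size_map size_iota ltnn.
case/allPn => _ /mapP[j _ ->] not_root; exists (d / (j.+2)%:R) => //.
by rewrite divr_gt0 ?ltr0n //= ltr_pdivrMr ?ltr0n // ltr_pMr // ltr1n.
Qed.

Lemma disc_det_toward_spread_near0 (F : numFieldType) n (M : 'M[F]_n) (d : F) :
  0 < d -> exists2 u, 0 < u < d & disc_det (toward_spread M u) != 0.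
Proof.
move=> d_gt0; have [q q_neq0 qE] := disc_det_toward_spread_poly M.
have [u u_in q_u] := poly_nonroot_near0 q_neq0 d_gt0.
by exists u; rewrite // qE.
Qed.

Section ContinuousFunRing.
Variables (T : ptopologicalType) (F : numFieldType).

Definition continuous_fun : {pred T -> F} := [pred f | `[< continuous f >]].

Lemma continuous_fun_subring_closed : subring_closed continuous_fun.
Proof.
split=> [|f g|f g].
- by apply/asboolP; exact: cst_continuous.
- move=> /asboolP fc /asboolP gc; apply/asboolP => x.
  by apply: continuousB; [exact: fc | exact: gc].
- move=> /asboolP fc /asboolP gc; apply/asboolP => x.
  by apply: continuousM; [exact: fc | exact: gc].
Qed.

HB.instance Definition _ := GRing.isSubringClosed.Build _ continuous_fun
  continuous_fun_subring_closed.

Definition cfun := {f : T -> F | f \in continuous_fun}.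

HB.instance Definition _ := [isSub of cfun for @sval _ _].
HB.instance Definition _ := [Choice of cfun by <:].
HB.instance Definition _ := [SubChoice_isSubComNzRing of cfun by <:].

Definition cfun_eval (x : T) (f : cfun) : F := val f x.

Fact cfun_eval_is_zmod_morphism x : zmod_morphism (cfun_eval x).
Proof. by []. Qed.

Fact cfun_eval_is_monoid_morphism x : monoid_morphism (cfun_eval x).
Proof. by []. Qed.

HB.instance Definition _ x := GRing.isZmodMorphism.Build cfun F (cfun_eval x)
  (cfun_eval_is_zmod_morphism x).
HB.instance Definition _ x := GRing.isMonoidMorphism.Build cfun F (cfun_eval x)
  (cfun_eval_is_monoid_morphism x).

Lemma continuous_cfun (f : cfun) : continuous (val f).
Proof. exact/asboolP/(valP f). Qed.

End ContinuousFunRing.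

(* disc_det A is the value at A of disc_det of the generic matrix of
   coordinate functions, computed in the ring of continuous functions. *)
Lemma continuous_disc_det (F : numFieldType) n :
  continuous (@disc_det F n : 'M[F]_n -> F).
Proof.
have coord_cfun (i j : 'I_n) :
    (fun A : 'M[F]_n => A i j) \in @continuous_fun 'M[F]_n F.
  by apply/asboolP; exact: coord_continuous.
pose Gen : 'M[cfun 'M[F]_n F]_n :=
  \matrix_(i, j) exist _ (fun A : 'M[F]_n => A i j) (coord_cfun i j).
have evalGen A : map_mx (cfun_eval A) Gen = A.
  by apply/matrixP => i j; rewrite !mxE.
have -> : @disc_det F n = val (disc_det Gen).
  by apply/funext => A; rewrite -{1}(evalGen A) -map_disc_det.
exact: continuous_cfun.
Qed.

Lemma char_poly_conj (R : comUnitRingType) n (C A : 'M[R]_n) :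
  C \in unitmx -> char_poly (C *m A *m invmx C) = char_poly A.
Proof.
move=> C_unit; pose Cp := map_mx polyC C; pose Cip := map_mx polyC (invmx C).
have CpK : Cp *m Cip = 1%:M by rewrite -map_mxM mulmxV // map_mx1.
rewrite /char_poly.
have -> : char_poly_mx (C *m A *m invmx C) = Cp *m char_poly_mx A *m Cip.
  rewrite /char_poly_mx !map_mxM mulmxBr mulmxBl; congr (_ - _).
  by rewrite scalar_mxC -mulmxA CpK mulmx1.
by rewrite !det_mulmx mulrAC -det_mulmx CpK det1 mul1r.
Qed.

Lemma char_poly_mulmxC (R : comUnitRingType) n (C A : 'M[R]_n) :
  C \in unitmx -> char_poly (C *m A) = char_poly (A *m C).
Proof. by move=> C_unit; rewrite -(char_poly_conj (A *m C) C_unit) mulmxA mulmxK. Qed.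

Definition dominates_entries (F : numFieldType) n (N : 'M[F]_n -> F) :=
  exists2 c : F, 0 < c & forall (X : 'M[F]_n) i j, `|X i j| <= c * N X.

Section Approximation.
Variables (F : numFieldType) (n : nat) (N : 'M[F]_n -> F) (c : F).
Hypotheses (normN : is_mxnorm N) (c_gt0 : 0 < c)
  (entry_le : forall (X : 'M[F]_n) i j, `|X i j| <= c * N X).

Let normN_ge0 X : 0 <= N X. Proof. by case: normN. Qed.
Let normN_triangle X Y : N (X + Y) <= N X + N Y. Proof. by case: normN. Qed.
Let normN_scale (a : F) X : N (a *: X) = `|a| * N X. Proof. by case: normN. Qed.

Lemma mxnorm_distC X Y : N (X - Y) = N (Y - X).
Proof. by rewrite -opprB -scaleN1r normN_scale normrN1 mul1r. Qed.

Lemma disc_det_neq0_near X : disc_det X != 0 ->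
  exists2 r, 0 < r & forall Y, N (Y - X) < r -> disc_det Y != 0.
Proof.
move=> dX; have /cvgrPdist_lt/(_ `|disc_det X|) := @continuous_disc_det F n X.
rewrite normr_gt0 dX => /(_ isT) /nbhs_ballP[e e_gt0 near_X].
exists (e / c) => [|Y YX]; first by rewrite divr_gt0.
have XY : ball X e Y.
  split=> // i j; rewrite /ball /= distrC.
  have -> : Y i j - X i j = (Y - X) i j by rewrite !mxE.
  by rewrite (le_lt_trans (entry_le _ i j)) // mulrC -ltr_pdivlMr.
by apply: contraTneq (near_X Y XY) => ->; rewrite subr0 ltxx.
Qed.

Lemma mxnorm_scale_small W d : 0 < d ->
  exists2 e, 0 < e & forall u, 0 < u < e -> N (u *: W) < d.
Proof.
move=> d_gt0; have W1_gt0 : 0 < N W + 1 by rewrite ltr_wpDl ?normN_ge0.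
exists (d / (N W + 1)) => [|u /andP[u_gt0 u_lt]]; first by rewrite divr_gt0.
rewrite normN_scale gtr0_norm // (@le_lt_trans _ _ (u * (N W + 1))) //.
  by apply: ler_wpM2l; [exact: ltW | rewrite lerDl].
by rewrite -ltr_pdivlMr.
Qed.

Lemma disc_det_dense M d : 0 < d -> exists2 X, disc_det X != 0 & N (M - X) < d.
Proof.
move=> d_gt0; have [e e_gt0 small] := mxnorm_scale_small (spread_mx F n - M) d_gt0.
have [u u_in dX] := disc_det_toward_spread_near0 M e_gt0.
exists (toward_spread M u); rewrite // mxnorm_distC.
by rewrite /toward_spread addrAC subrr add0r small.
Qed.

Lemma open_in_GL_disc_det_ball A eps :
  open_in_GL N (fun X => disc_det X != 0 /\ N (A - X) < eps).
Proof.
split=> [X [dX _] | X [dX AX]]; first exact: disc_det_neq0_unitmx.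
have [r r_gt0 near_X] := disc_det_neq0_near dX.
have s_gt0 : 0 < eps - N (A - X) by rewrite subr_gt0.
have cmp_rs : r >=< (eps - N (A - X)) by rewrite real_comparable ?gtr0_real.
exists (Num.min r (eps - N (A - X))) => [|Y _].
  by rewrite comparable_lt_min // r_gt0.
rewrite comparable_lt_min // => /andP[Yr Yeps]; split; first exact: near_X.
have -> : A - Y = (A - X) + (X - Y) by rewrite addrA subrK.
by rewrite (le_lt_trans (normN_triangle _ _)) // -ltrBrDl (mxnorm_distC X).
Qed.

Lemma open_map_mulmx_simple (R : realType) (iota : {rmorphism F -> R[i]})
    (h : 'M[F]_n -> 'M[F]_n) A C eps :
  open_GL_map N h -> C \in unitmx -> 0 < eps ->
  exists X, [/\ X \in unitmx, simple_spectrum iota X, N (A - X) < eps &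
                simple_spectrum iota (h X *m C)].
Proof.
move=> h_open C_unit eps_gt0.
have [X0 dX0 AX0] := disc_det_dense A eps_gt0.
have [_ /(_ (h X0))] := h_open _ (open_in_GL_disc_det_ball A eps).
case=> [|d d_gt0 near_hX0]; first by exists X0.
have [e e_gt0 small] := mxnorm_scale_small (spread_mx F n *m invmx C - h X0) d_gt0.
have [u u_in dY] := disc_det_toward_spread_near0 (h X0 *m C) e_gt0.
pose Y := toward_spread (h X0 *m C) u *m invmx C.
have YC : Y *m C = toward_spread (h X0 *m C) u by rewrite mulmxKV.
have Y_unit : Y \in unitmx.
  by rewrite unitmx_mul unitmx_inv C_unit andbT; exact: disc_det_neq0_unitmx dY.
have [|X [dX AX] YE] := near_hX0 Y Y_unit.
  rewrite /Y /toward_spread mulmxDl -scalemxAl mulmxBl mulmxK //.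
  by rewrite addrAC subrr add0r small.
exists X; split=> //;
  [exact: disc_det_neq0_unitmx | exact: disc_det_neq0_simple |].
by rewrite -YE YC; exact: disc_det_neq0_simple.
Qed.

End Approximation.

Lemma prop1_for_of_dominates_entries (R : realType) (F : numFieldType)
    (iota : {rmorphism F -> R[i]}) :
  (forall n (N : 'M[F]_n -> F), is_mxnorm N -> dominates_entries N) ->
  prop1_for iota.
Proof.
move=> dominate n _ N normN f g fU gU fg_open A B eps eps_gt0.
have [c c_gt0 entry_le] := dominate n N normN.
case: fg_open => [f_open | g_open].
  have [B0 dB0 BB0] := disc_det_dense normN B eps_gt0.
  have B0_unit := disc_det_neq0_unitmx dB0.
  have B0_simple := disc_det_neq0_simple iota dB0.
  have [X [X_unit X_simple AX fXgB0]] :=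
    open_map_mulmx_simple normN c_gt0 entry_le iota A f_open (gU _ B0_unit) eps_gt0.
  by exists X, B0.
have [A0 dA0 AA0] := disc_det_dense normN A eps_gt0.
have A0_unit := disc_det_neq0_unitmx dA0.
have A0_simple := disc_det_neq0_simple iota dA0.
have [X [X_unit X_simple BX gXfA0]] :=
  open_map_mulmx_simple normN c_gt0 entry_le iota B g_open (fU _ A0_unit) eps_gt0.
by exists A0, X; rewrite /simple_spectrum char_poly_mulmxC ?fU.
Qed.

Section RowNorm.
Variables (R : realType) (k : nat) (nu : 'rV[R]_k -> R).
Hypotheses (nu_ge0 : forall v, 0 <= nu v) (nu_eq0 : forall v, nu v = 0 -> v = 0)
  (nuD : forall v w, nu (v + w) <= nu v + nu w)
  (nuZ : forall (a : R) v, nu (a *: v) = `|a| * nu v).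

Let nuN v : nu (- v) = nu v.
Proof. by rewrite -scaleN1r nuZ normrN1 mul1r. Qed.

Let nu_sum (I : Type) (r : seq I) (f : I -> 'rV[R]_k) :
  nu (\sum_(i <- r) f i) <= \sum_(i <- r) nu (f i).
Proof.
elim: r => [|a r IH]; first by rewrite !big_nil -(scale0r 0) nuZ normr0 mul0r.
by rewrite !big_cons (le_trans (nuD _ _)) // lerD.
Qed.

Lemma row_seminorm_le_coords v : nu v <= \sum_(j < k) `|v 0 j| * nu 'e_j.
Proof.
rewrite {1}(row_sum_delta v) (le_trans (nu_sum _ _)) //.
by apply: ler_sum => j _; rewrite nuZ.
Qed.

Lemma row_seminorm_dist v w : `|nu v - nu w| <= nu (v - w).
Proof.
have := nuD (w - v) v; have := nuD (v - w) w.
rewrite !subrK -opprB nuN ler_norml => vw wv; apply/andP; split; lra.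
Qed.

Lemma continuous_row_seminorm : continuous nu.
Proof.
move=> v; apply/(@cvgrPdist_lt _ _ _ (nbhs v)) => e e_gt0.
pose L := \sum_(j < k) nu 'e_j.
have L1_gt0 : 0 < L + 1 by rewrite ltr_wpDl // sumr_ge0.
apply/nbhs_ballP; exists (e / (L + 1)) => [|w [_ vw]] /=; first by rewrite divr_gt0.
rewrite (le_lt_trans (row_seminorm_dist _ _)) //.
rewrite (le_lt_trans (row_seminorm_le_coords _)) //.
rewrite (@le_lt_trans _ _ (\sum_(j < k) e / (L + 1) * nu 'e_j)) //.
  apply: ler_sum => j _; apply: ler_wpM2r => //.
  by have := vw 0 j; rewrite /ball /= !mxE => /ltW.
by rewrite -mulr_sumr -/L mulrAC ltr_pdivrMr // ltr_pM2l // ltrDl.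
Qed.

Local Open Scope classical_set_scope.

(* The minimum of nu on the (compact) unit sphere of the sup norm is positive. *)
Lemma row_norm_dominates_coords :
  exists2 c : R, 0 < c & forall (v : 'rV[R]_k) j, `|v 0 j| <= c * nu v.
Proof.
have [[j0 _] | no_coord] := pselect (exists j : 'I_k, True); last first.
  by exists 1 => // v j; exfalso; apply: no_coord; exists j.
pose S := [set v : 'rV[R]_k | `|v| = 1].
have normalize (v : 'rV[R]_k) : v != 0 -> `|(`|v|^-1 *: v)| = 1.
  by move=> v_neq0; apply: normrZV; rewrite unitfE normr_eq0.
have S_neq0 : S !=set0.
  exists (`|'e_j0 : 'rV[R]_k|^-1 *: 'e_j0); apply: normalize.
  by apply/eqP => /rowP/(_ j0)/eqP; rewrite !mxE !eqxx /= oner_eq0.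
have S_compact : compact S.
  apply: bounded_closed_compact.
    exists 1; split; first by rewrite num_real.
    by move=> x x_gt1 v Sv; rewrite /= Sv ltW.
  rewrite [S](_ : _ = Num.norm @^-1` [set 1]) //.
  by apply: (continuous_closedP _).1; [exact: norm_continuous | exact: closed_eq].
have [v0 Sv0 nu_min] := EVT_min_rV S_neq0 S_compact
  (continuous_subspaceT continuous_row_seminorm).
move: Sv0; rewrite inE /S /= => v0_norm.
have nu_v0_gt0 : 0 < nu v0.
  rewrite lt0r nu_ge0 andbT; apply/eqP => /nu_eq0 v0_eq0.
  by move: v0_norm; rewrite v0_eq0 normr0 => /eqP; rewrite eq_sym oner_eq0.
exists (nu v0)^-1 => [|v j]; first by rewrite invr_gt0.
have [->|v_neq0] := eqVneq v 0.
  by rewrite mxE normr0 mulr_ge0 ?nu_ge0 // invr_ge0 ltW.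
have v_gt0 : 0 < `|v| by rewrite normr_gt0.
have nu_v : nu v = `|v| * nu (`|v|^-1 *: v).
  by rewrite nuZ normfV normr_id mulrA divff ?mul1r // gt_eqF.
have vj_le : `|v 0 j| <= `|v|.
  rewrite [leRHS]/Num.Def.normr /= mx_normrE; apply/bigmax_geP; right => /=.
  by exists (0, j).
rewrite (le_trans vj_le) // mulrC ler_pdivlMr // nu_v.
by apply: ler_wpM2l; [exact: ltW | apply: nu_min; rewrite inE /S /= normalize].
Qed.

End RowNorm.

Lemma mxnorm_dominates_entries_real (R : realType) n (N : 'M[R]_n -> R) :
  is_mxnorm N -> dominates_entries N.
Proof.
case=> N_ge0 N_eq0 ND NZ.
have [c c_gt0 entry_le] : exists2 c : R, 0 < c &
    forall (v : 'rV[R]_(n * n)) j, `|v 0 j| <= c * N (vec_mx v).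
  apply: (@row_norm_dominates_coords R _ (fun v => N (vec_mx v))) => [v|v|v w|a v].
  - exact: N_ge0.
  - by move/N_eq0/(congr1 mxvec); rewrite vec_mxK linear0.
  - by rewrite linearD ND.
  - by rewrite linearZ NZ.
exists c => // X i j.
by have := entry_le (mxvec X) (mxvec_index i j); rewrite mxvecE mxvecK.
Qed.

Section ComplexMatrixNorm.
Variables (R : realType) (n : nat).
Local Open Scope complex_scope.

Definition mx_of_re_im (v : 'rV[R]_(n * n + n * n)) : 'M[R[i]]_n :=
  \matrix_(i, j) (lsubmx v 0 (mxvec_index i j) +i* rsubmx v 0 (mxvec_index i j)).

Lemma mx_of_re_imD v w : mx_of_re_im (v + w) = mx_of_re_im v + mx_of_re_im w.
Proof. by apply/matrixP => i j; rewrite !mxE. Qed.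

Lemma mx_of_re_imZ (a : R) v : mx_of_re_im (a *: v) = a%:C *: mx_of_re_im v.
Proof. by apply/matrixP => i j; rewrite !mxE; simpc. Qed.

Lemma mx_of_re_im_eq0 v : mx_of_re_im v = 0 -> v = 0.
Proof.
move=> /matrixP v0; rewrite -[v]hsubmxK.
have [-> ->] : lsubmx v = 0 /\ rsubmx v = 0.
  by split; apply/rowP => t; case/mxvec_indexP: t => i j; have := v0 i j;
    rewrite !mxE => -[].
by rewrite row_mx0.
Qed.

Lemma mx_of_re_imK (X : 'M[R[i]]_n) :
  mx_of_re_im (row_mx (mxvec (map_mx (@complex.Re R) X))
                      (mxvec (map_mx (@complex.Im R) X))) = X.
Proof.
apply/matrixP => i j; rewrite mxE row_mxKl row_mxKr !mxvecE !mxE.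
by case: (X i j).
Qed.

Lemma normc_real (a : R) : `|a%:C| = `|a|%:C.
Proof. by rewrite normc_def /= expr0n addr0 sqrtr_sqr. Qed.

Lemma normc_le_Re_Im (z : R[i]) : `|z| <= (`|complex.Re z| + `|complex.Im z|)%:C.
Proof.
rewrite {1}[z]complexE (le_trans (ler_normD _ _)) // normrM !normc_real rmorphD.
by rewrite normc_def /= expr0n expr1n add0r sqrtr1 mul1r.
Qed.

Lemma mxnorm_dominates_entries_complex (N : 'M[R[i]]_n -> R[i]) :
  is_mxnorm N -> dominates_entries N.
Proof.
case=> N_ge0 N_eq0 ND NZ.
pose NR X := complex.Re (N X).
have NE X : N X = (NR X)%:C by rewrite /NR RRe_real ?ger0_real.
have [c c_gt0 entry_le] : exists2 c : R, 0 < c &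
    forall (v : 'rV[R]_(n * n + n * n)) j, `|v 0 j| <= c * NR (mx_of_re_im v).
  apply: (@row_norm_dominates_coords R _ (fun v => NR (mx_of_re_im v)))
    => [v|v NR0|v w|a v].
  - by rewrite -ler0c -NE.
  - by apply/mx_of_re_im_eq0/N_eq0; rewrite NE NR0.
  - by rewrite -lecR rmorphD /= -!NE mx_of_re_imD; exact: ND.
  - by apply: complexI; rewrite rmorphM /= -!NE mx_of_re_imZ NZ normc_real.
exists (2 * c)%:C => [|X i j]; first by rewrite ltcR mulr_gt0.
pose v := row_mx (mxvec (map_mx (@complex.Re R) X))
                 (mxvec (map_mx (@complex.Im R) X)).
have := entry_le v (lshift _ (mxvec_index i j)).
have := entry_le v (rshift _ (mxvec_index i j)).
rewrite row_mxEl row_mxEr !mxvecE !mxE /v mx_of_re_imK => Im_le Re_le.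
by rewrite (le_trans (normc_le_Re_Im _)) // NE -rmorphM lecR; lra.
Qed.

End ComplexMatrixNorm.

Theorem proposition1 (R : realType) :
  prop1_for (real_complex R : {rmorphism R -> R[i]}) /\
  prop1_for (@idfun R[i] : {rmorphism R[i] -> R[i]}).
Proof.
split; apply: prop1_for_of_dominates_entries => n N.
  exact: mxnorm_dominates_entries_real.
exact: mxnorm_dominates_entries_complex.
Qed.
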